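(* Let $S$ be a semigroup and let $a,b\in S$ satisfy $a=aba$ and $b=bab$. Then \[(aSa,\cdot)\cong(aSb,\star_{aab})\cong(bSa,\star_{baa}).\]
   Context: For $u,v$ in a semigroup $S$, $uSv=\{uxv: x\in S\}$. For $c\in S$, $\star_c$ denotes the sandwich operation $x\star_c y=xcy$. $(T,\star_c)$ denotes the subset $T\subseteq S$ with the operation $\star_c$ (under which it is closed), and $(T,\cdot)$ denotes $T$ with the original operation of $S$. *)

Definition associative_op {T : Type} (mul : T -> T -> T) : Prop :=
  forall x y z, mul x (mul y z) = mul (mul x y) z.

Definition sandwich_set {T : Type} (mul : T -> T -> T) (u v : T) : T -> Prop :=
  fun y => exists x, y = mul (mul u x) v.

Definition star {T : Type} (mul : T -> T -> T) (c : T) : T -> T -> T :=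
  fun x y => mul (mul x c) y.

Definition subsemigroup_iso {T : Type} (A : T -> Prop) (op1 : T -> T -> T)
    (B : T -> Prop) (op2 : T -> T -> T) : Prop :=
  exists f : T -> T,
    (forall x, A x -> B (f x)) /\
    (forall x y, A x -> A y -> f x = f y -> x = y) /\
    (forall z, B z -> exists x, A x /\ f x = z) /\
    (forall x y, A x -> A y -> f (op1 x y) = op2 (f x) (f y)).


(* Since a = aba and b = bab, right multiplication by b maps aSa onto aSb
   with inverse y |-> ya, and y |-> bya maps aSb onto bSa with inverse
   z |-> azb.  Both maps turn products into sandwich products because
   aba = a, i.e. xba = x and aby = y for x, y in aSa. *)

Lemma subsemigroup_iso_of_inverse {T : Type} (A B : T -> Prop)
    (op1 op2 : T -> T -> T) (f g : T -> T) :
  (forall x, A x -> B (f x)) ->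
  (forall y, B y -> A (g y)) ->
  (forall x, A x -> g (f x) = x) ->
  (forall y, B y -> f (g y) = y) ->
  (forall x y, A x -> A y -> f (op1 x y) = op2 (f x) (f y)) ->
  subsemigroup_iso A op1 B op2.
Proof.
  intros fAB gBA gK fK fM.
  exists f; repeat split; auto.
  - intros x y Ax Ay Efxy.
    rewrite <- (gK x Ax), <- (gK y Ay), Efxy; reflexivity.
  - intros y By; exists (g y); auto.
Qed.

Section Sandwich.

Variables (T : Type) (mul : T -> T -> T).
Hypothesis mulA : associative_op mul.

Local Infix "*" := mul.

Lemma sandwich_mulr (u v w x : T) :
  sandwich_set mul u v x -> sandwich_set mul u w (x * w).
Proof.
  intros [s ->]; exists (s * v).
  rewrite !mulA; reflexivity.
Qed.

Lemma sandwich_mull (u v w x : T) :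
  sandwich_set mul u v x -> sandwich_set mul w v (w * x).
Proof.
  intros [s ->]; exists (u * s).
  rewrite !mulA; reflexivity.
Qed.

Lemma sandwich_absorbl (u v w x : T) :
  u = u * w * u -> sandwich_set mul u v x -> u * w * x = x.
Proof.
  intros Eu [s ->].
  rewrite !mulA, <- Eu; reflexivity.
Qed.

Lemma sandwich_absorbr (u v w x : T) :
  v = v * w * v -> sandwich_set mul u v x -> x * w * v = x.
Proof.
  intros Ev [s ->].
  rewrite <- !mulA, (mulA v w v), <- Ev; reflexivity.
Qed.

Variables a b : T.
Hypotheses (haba : a = a * b * a) (hbab : b = b * a * b).

Lemma mulr_star (x y : T) :
  sandwich_set mul a a x -> sandwich_set mul a a y ->
  x * y * b = star mul (a * a * b) (x * b) (y * b).
Proof.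
  intros Sx Sy; unfold star.
  transitivity ((x * b * a) * (a * b * y) * b).
  - rewrite (sandwich_absorbr _ _ _ _ haba Sx),
            (sandwich_absorbl _ _ _ _ haba Sy).
    reflexivity.
  - rewrite !mulA; reflexivity.
Qed.

Lemma conj_star (y y' : T) :
  b * star mul (a * a * b) y y' * a
  = star mul (b * a * a) (b * y * a) (b * y' * a).
Proof.
  unfold star.
  transitivity (b * y * (a * b * a) * a * b * y' * a).
  - rewrite <- haba, !mulA; reflexivity.
  - rewrite !mulA; reflexivity.
Qed.

Lemma iso_aSa_aSb :
  subsemigroup_iso (sandwich_set mul a a) mul
                   (sandwich_set mul a b) (star mul (a * a * b)).
Proof.
  apply (subsemigroup_iso_of_inverse _ _ _ _ (fun x => x * b) (fun y => y * a)).
  - intros x; apply sandwich_mulr.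
  - intros y; apply sandwich_mulr.
  - intros x; apply sandwich_absorbr; exact haba.
  - intros y; apply sandwich_absorbr; exact hbab.
  - exact mulr_star.
Qed.

Lemma iso_aSb_bSa :
  subsemigroup_iso (sandwich_set mul a b) (star mul (a * a * b))
                   (sandwich_set mul b a) (star mul (b * a * a)).
Proof.
  apply (subsemigroup_iso_of_inverse _ _ _ _
           (fun y => b * y * a) (fun z => a * z * b)).
  - intros y Sy; apply (sandwich_mulr _ b), (sandwich_mull _ _ _ _ Sy).
  - intros z Sz; apply (sandwich_mulr _ a), (sandwich_mull _ _ _ _ Sz).
  - intros y Sy.
    transitivity (a * b * y * a * b); [rewrite !mulA; reflexivity |].
    rewrite (sandwich_absorbl _ _ _ _ haba Sy).
    exact (sandwich_absorbr _ _ _ _ hbab Sy).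
  - intros z Sz.
    transitivity (b * a * z * b * a); [rewrite !mulA; reflexivity |].
    rewrite (sandwich_absorbl _ _ _ _ hbab Sz).
    exact (sandwich_absorbr _ _ _ _ haba Sz).
  - intros y y' _ _; apply conj_star.
Qed.

End Sandwich.

Theorem lemma2p5 (T : Type) (mul : T -> T -> T) (mulA : associative_op mul)
  (a b : T) (haba : a = mul (mul a b) a) (hbab : b = mul (mul b a) b) :
  subsemigroup_iso (sandwich_set mul a a) mul
                   (sandwich_set mul a b) (star mul (mul (mul a a) b)) /\
  subsemigroup_iso (sandwich_set mul a b) (star mul (mul (mul a a) b))
                   (sandwich_set mul b a) (star mul (mul (mul b a) a)).
Proof.
  split.
  - exact (iso_aSa_aSb T mul mulA a b haba hbab).
  - exact (iso_aSb_bSa T mul mulA a b haba hbab).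
Qed.
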